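(* Let $(a,b,c,\lambda,\delta)\in(\mathbb F^\times)^4\times\mathbb F$. For any $\triangle_q$-module $V$ and $v\in V$, there exists a $\triangle_q$-module homomorphism $W_\lambda^\delta(a,b,c)\to V$ sending $w_0$ to $v$ if and only if (i) there exists a $\triangle_q$-module homomorphism $M_\lambda(a,b,c)\to V$ sending $m_0$ to $v$, and (ii) $\prod_{i=0}^{d'-1}(A-\theta_i)v=\delta v$.
   Context: $\mathbb F$ is an algebraically closed field and $q\in\mathbb F^\times$ a root of unity of order $d\notin\{1,2,4\}$; $d'=d$ if $d$ odd, $d'=d/2$ if $d$ even. $\triangle_q$ is the unital associative $\mathbb F$-algebra with generators $A,B,C$ subject to: each of $A+\frac{qBC-q^{-1}CB}{q^2-q^{-2}}$, $B+\frac{qCA-q^{-1}AC}{q^2-q^{-2}}$, $C+\frac{qAB-q^{-1}BA}{q^2-q^{-2}}$ is central; $\alpha,\beta,\gamma$ are these times $q+q^{-1}$. For $(a,b,c,\lambda)\in(\mathbb F^\times)^4$, $i\in\mathbb N$: $\theta_i=a\lambda^{-1}q^{2i}+a^{-1}\lambda q^{-2i}$, $\theta_i^*=b\lambda^{-1}q^{2i}+b^{-1}\lambda q^{-2i}$, $\varphi_i=a^{-1}b^{-1}\lambda q(q^i-q^{-i})(\lambda^{-1}q^{i-1}-\lambda q^{1-i})(q^{-i}-abc\lambda^{-1}q^{i-1})(q^{-i}-abc^{-1}\lambda^{-1}q^{i-1})$. $M_\lambda(a,b,c)$ has basis $\{m_i\}_{i\in\mathbb N}$ with $(A-\theta_i)m_i=m_{i+1}$,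 $(B-\theta_i^* )m_i=\varphi_im_{i-1}$, and $\alpha,\beta,\gamma$ acting as $(b+b^{-1})(c+c^{-1})+(a+a^{-1})(\lambda q+\lambda^{-1}q^{-1})$, $(c+c^{-1})(a+a^{-1})+(b+b^{-1})(\lambda q+\lambda^{-1}q^{-1})$, $(a+a^{-1})(b+b^{-1})+(c+c^{-1})(\lambda q+\lambda^{-1}q^{-1})$. For $\delta\in\mathbb F$, $O_\lambda^\delta(a,b,c)$ is the span of $\{\delta m_i-m_{d'+i}\}_{i\in\mathbb N}$ (a submodule), $W_\lambda^\delta(a,b,c)=M_\lambda(a,b,c)/O_\lambda^\delta(a,b,c)$ and $w_i=m_i+O_\lambda^\delta(a,b,c)$. *)

From HB Require Import structures.
From mathcomp Require Import all_boot all_order all_algebra.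
Set Implicit Arguments. Unset Strict Implicit. Unset Printing Implicit Defensive.
Import Order.TTheory GRing.Theory Num.Theory.
Local Open Scope ring_scope.

Section UAWq.
Variables (F : closedFieldType) (q : F).

(* The three elements whose centrality defines triangle_q, evaluated through
   actions A B C on a vector space (x \in V). *)
Definition cA {V : lmodType F} (A B C : V -> V) (x : V) : V :=
  A x + (q ^+ 2 - q ^- 2)^-1 *: (q *: B (C x) - q^-1 *: C (B x)).

Record triMod := TriMod {
  tm_sort :> lmodType F;
  tmA : {linear tm_sort -> tm_sort};
  tmB : {linear tm_sort -> tm_sort};
  tmC : {linear tm_sort -> tm_sort};
  tm_central :
    forall (X : tm_sort -> tm_sort),
      (X = cA tmA tmB tmC \/ X = cA tmB tmC tmA \/ X = cA tmC tmA tmB) ->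
      forall x, X (tmA x) = tmA (X x) /\ X (tmB x) = tmB (X x)
                /\ X (tmC x) = tmC (X x)
}.

Definition intertwines {U V : lmodType F} (AU BU CU : U -> U)
  (AV BV CV : V -> V) (f : U -> V) : Prop :=
  forall x, f (AU x) = AV (f x) /\ f (BU x) = BV (f x) /\ f (CU x) = CV (f x).


Definition theta (a b c lam : F) (i : nat) : F :=
  a * lam^-1 * q ^ (2 * i%:Z) + a^-1 * lam * q ^ (- (2 * i%:Z)).
Definition thetas (a b c lam : F) (i : nat) : F :=
  b * lam^-1 * q ^ (2 * i%:Z) + b^-1 * lam * q ^ (- (2 * i%:Z)).
Definition phi (a b c lam : F) (i : nat) : F :=
  a^-1 * b^-1 * lam * q * (q ^ i%:Z - q ^ (- i%:Z))
  * (lam^-1 * q ^ (i%:Z - 1) - lam * q ^ (1 - i%:Z))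
  * (q ^ (- i%:Z) - a * b * c * lam^-1 * q ^ (i%:Z - 1))
  * (q ^ (- i%:Z) - a * b * c^-1 * lam^-1 * q ^ (i%:Z - 1)).

(* Scalars by which alpha, beta, gamma act on M_lambda(a,b,c). *)
Definition alpha0 (a b c lam : F) : F := (b + b^-1) * (c + c^-1) + (a + a^-1) * (lam * q + lam^-1 * q^-1).
Definition beta0 (a b c lam : F) : F := (c + c^-1) * (a + a^-1) + (b + b^-1) * (lam * q + lam^-1 * q^-1).
Definition gamma0 (a b c lam : F) : F := (a + a^-1) * (b + b^-1) + (c + c^-1) * (lam * q + lam^-1 * q^-1).

(* M_lambda(a,b,c): underlying space {poly F}, with m_i := 'X^i. *)
Definition MA (a b c lam : F) (p : {poly F}) : {poly F} :=
  \sum_(i < size p) p`_i *: (theta a b c lam i *: 'X^i + 'X^(i.+1)).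
Definition MB (a b c lam : F) (p : {poly F}) : {poly F} :=
  \sum_(i < size p) p`_i *: (thetas a b c lam i *: 'X^i + phi a b c lam i *: 'X^(i.-1)).
(* C is determined by the fact that gamma = (q+q^-1)(C + (qAB-q^-1BA)/(q^2-q^-2))
   acts as the scalar gamma0. *)
Definition MC (a b c lam : F) (p : {poly F}) : {poly F} :=
  (gamma0 a b c lam / (q + q^-1)) *: p
  - (q ^+ 2 - q ^- 2)^-1 *: (q *: MA a b c lam (MB a b c lam p) - q^-1 *: MB a b c lam (MA a b c lam p)).
Definition m0 : {poly F} := 1.

Definition dprime (d : nat) : nat := if odd d then d else d./2.


(* O^delta_lambda(a,b,c) = span{delta m_i - m_(d'+i)} is exactly the set of
   polynomials divisible by g := 'X^d' - delta.  The quotient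
   W = M / O is modelled by 'rV_d', via the canonical projection
   p |-> coordinates of (p %% g) in the basis 1, X, ..., X^(d'-1). *)
Definition gW (d : nat) (delta : F) : {poly F} := 'X^(dprime d) - delta%:P.
Definition toW (d : nat) (delta : F) (p : {poly F}) : 'rV[F]_(dprime d) :=
  \row_(j < dprime d) (p %% gW d delta)`_j.
Definition ofW (d : nat) (r : 'rV[F]_(dprime d)) : {poly F} :=
  \sum_(j < dprime d) r 0 j *: 'X^j.
Definition WA (a b c lam : F) (d : nat) (delta : F) (r : 'rV[F]_(dprime d)) :=
  toW d delta (MA a b c lam (ofW r)).
Definition WB (a b c lam : F) (d : nat) (delta : F) (r : 'rV[F]_(dprime d)) :=
  toW d delta (MB a b c lam (ofW r)).
Definition WC (a b c lam : F) (d : nat) (delta : F) (r : 'rV[F]_(dprime d)) :=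
  toW d delta (MC a b c lam (ofW r)).
Definition w0 (d : nat) (delta : F) : 'rV[F]_(dprime d) := toW d delta 1.

Fixpoint prodAtheta (a b c lam : F) (V : lmodType F) (A : V -> V) (n : nat) (v : V) : V :=
  match n with
  | 0 => v
  | n'.+1 => A (prodAtheta a b c lam A n' v) - theta a b c lam n' *: prodAtheta a b c lam A n' v
  end.

End UAWq.

Arguments WA {F} q a b c lam d delta r.
Arguments WB {F} q a b c lam d delta r.
Arguments WC {F} q a b c lam d delta r.
Arguments w0 {F} d delta.
Arguments ofW {F} d r.

(* In the model m_i = 'X^i of M_lambda(a,b,c), the submodule O^delta is the ideal generated
   by g = 'X^d' - delta.  Since q^d' = +-1, the scalars theta_i, theta*_i and phi_i are
   d'-periodic, so A, B and C commute with multiplication by g and descend to W = M/(g).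
   A homomorphism M -> V with m_0 |-> v maps m_i to prod_{j<i} (A - theta_j) v; by
   periodicity it kills g exactly when it maps m_d' to delta v, which is condition (ii). *)

From HB Require Import structures.
From mathcomp Require Import all_boot all_order all_algebra.
From mathcomp Require Import ring.
Set Implicit Arguments.
Unset Strict Implicit.
Unset Printing Implicit Defensive.
Import GRing.Theory.
Local Open Scope ring_scope.

Section LinearExtension.
Variables (F : fieldType) (V : lmodType F).
Implicit Types (e : nat -> V) (p : {poly F}).

Definition linext e p : V := \sum_(i < size p) p`_i *: e i.

Lemma linext_widen e p N : (size p <= N)%N -> linext e p = \sum_(i < N) p`_i *: e i.
Proof.
move=> le_pN; rewrite /linext -(subnKC le_pN) big_split_ord /= [X in _ + X]big1 ?addr0 //.
by move=> i _; rewrite nth_default ?scale0r //= leq_addr.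
Qed.

Lemma linext_is_linear e : linear (linext e).
Proof.
move=> k p r; set N := (size p + size r)%N.
have le_pN : (size p <= N)%N by rewrite leq_addr.
have le_rN : (size r <= N)%N by rewrite leq_addl.
have le_sN : (size (k *: p + r)%R <= N)%N.
  rewrite (leq_trans (size_polyD _ _)) // geq_max le_rN andbT.
  exact: leq_trans (size_scale_leq _ _) le_pN.
rewrite !(linext_widen _ le_pN, linext_widen _ le_rN, linext_widen _ le_sN).
rewrite scaler_sumr -big_split /=; apply: eq_bigr => i _.
by rewrite coefD coefZ scalerDl scalerA.
Qed.

HB.instance Definition _ e :=
  GRing.isLinear.Build F {poly F} V *:%R (linext e) (linext_is_linear e).

Lemma linext_Xn e k : linext e 'X^k = e k.
Proof.
rewrite /linext size_polyXn big_ord_recr /= big1 ?add0r.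
  by rewrite coefXn eqxx scale1r.
by move=> i _; rewrite coefXn ltn_eqF ?scale0r.
Qed.

End LinearExtension.

Lemma linext_mulXn (F : fieldType) (e : nat -> {poly F}) n p :
  (forall j, e (j + n)%N = e j * 'X^n) -> linext e (p * 'X^n) = linext e p * 'X^n.
Proof.
move=> e_shift; rewrite -[p]coefK poly_def mulr_suml !linear_sum mulr_suml /=.
apply: eq_bigr => i _; rewrite -scalerAl !linearZ /= -exprD !linext_Xn e_shift.
by rewrite scalerAl.
Qed.

Lemma linext_mul_XnsubC (F : fieldType) (e : nat -> {poly F}) n (c : F) p :
  (forall j, e (j + n)%N = e j * 'X^n) ->
  linext e (p * ('X^n - c%:P)) = linext e p * ('X^n - c%:P).
Proof.
move=> e_shift; rewrite !mulrBr linearB /= linext_mulXn //.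
by rewrite [p * _]mulrC [_ * c%:P]mulrC !mul_polyC linearZ.
Qed.

Section Periodicity.
Variables (F : closedFieldType) (q a b c lam : F) (n : nat).
Hypothesis q_neq0 : q != 0.
Hypothesis qn_sign : q ^+ n = 1 \/ q ^+ n = -1.

Lemma expfz_addn (z : int) : q ^ (z + n%:Z) = q ^ z * q ^+ n.
Proof. by rewrite expfzDr. Qed.

Lemma expfz_subn (z : int) : q ^ (z - n%:Z) = q ^ z * q ^+ n.
Proof.
rewrite expfzDr // -invr_expz -exprnP.
by case: qn_sign => ->; rewrite ?invr1 ?invrN1.
Qed.

Lemma expfz_double_addn j :
  q ^ (2 * (j + n)%N%:Z) = q ^ (2 * j%:Z) /\ q ^ (- (2 * (j + n)%N%:Z)) = q ^ (- (2 * j%:Z)).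
Proof.
rewrite PoszD.
have -> : - (2 * (j%:Z + n%:Z)) = - (2 * j%:Z) - n%:Z - n%:Z by ring.
have -> : 2 * (j%:Z + n%:Z) = 2 * j%:Z + n%:Z + n%:Z by ring.
by rewrite !expfz_subn !expfz_addn; case: qn_sign => ->; split; ring.
Qed.

Lemma theta_addn j : theta q a b c lam (j + n) = theta q a b c lam j.
Proof. by rewrite /theta; case: (expfz_double_addn j) => -> ->. Qed.

Lemma thetas_addn j : thetas q a b c lam (j + n) = thetas q a b c lam j.
Proof. by rewrite /thetas; case: (expfz_double_addn j) => -> ->. Qed.

Lemma phi_addn j : phi q a b c lam (j + n) = phi q a b c lam j.
Proof.
rewrite /phi PoszD.
have -> : 1 - (j%:Z + n%:Z) = 1 - j%:Z - n%:Z by ring.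
have -> : j%:Z + n%:Z - 1 = j%:Z - 1 + n%:Z by ring.
have -> : - (j%:Z + n%:Z) = - j%:Z - n%:Z by ring.
by rewrite !expfz_subn !expfz_addn; case: qn_sign => ->; ring.
Qed.

End Periodicity.

Lemma phi0 (F : closedFieldType) (q a b c lam : F) : phi q a b c lam 0 = 0.
Proof. by rewrite /phi subrr !mulr0 !mul0r. Qed.

Section VermaOperators.
Variables (F : closedFieldType) (q a b c lam : F).
Local Notation MA := (MA q a b c lam).
Local Notation MB := (MB q a b c lam).
Local Notation MC := (MC q a b c lam).
Local Notation theta := (theta q a b c lam).

Definition Am (j : nat) : {poly F} := theta j *: 'X^j + 'X^(j.+1).
Definition Bm (j : nat) : {poly F} :=
  thetas q a b c lam j *: 'X^j + phi q a b c lam j *: 'X^(j.-1).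

Lemma MA_is_linear : linear MA. Proof. exact: (linext_is_linear Am). Qed.
HB.instance Definition _ := GRing.isLinear.Build F {poly F} {poly F} *:%R MA MA_is_linear.

Lemma MB_is_linear : linear MB. Proof. exact: (linext_is_linear Bm). Qed.
HB.instance Definition _ := GRing.isLinear.Build F {poly F} {poly F} *:%R MB MB_is_linear.

Lemma MC_is_linear : linear MC.
Proof. by move=> k p r; rewrite /MC !linearP /= -!mul_polyC; ring. Qed.
HB.instance Definition _ := GRing.isLinear.Build F {poly F} {poly F} *:%R MC MC_is_linear.

Lemma MA_Xn j : MA 'X^j = Am j.
Proof. exact: linext_Xn. Qed.

Lemma XnS_MA j : 'X^(j.+1) = MA 'X^j - theta j *: 'X^j.
Proof. by rewrite MA_Xn /Am addrAC subrr add0r. Qed.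

Variables (n : nat) (delta : F).
Hypothesis q_neq0 : q != 0.
Hypothesis qn_sign : q ^+ n = 1 \/ q ^+ n = -1.
Local Notation g := ('X^n - delta%:P).

Lemma Am_addn j : Am (j + n) = Am j * 'X^n.
Proof. by rewrite /Am theta_addn // mulrDl -scalerAl -!exprD addSn. Qed.

Lemma Bm_addn j : Bm (j + n) = Bm j * 'X^n.
Proof.
rewrite /Bm thetas_addn // phi_addn // mulrDl -!scalerAl -!exprD.
(* For j = 0 the truncated predecessor gives 'X^(n.-1) <> 'X^(0.-1) * 'X^n, but phi 0 = 0. *)
by case: j => [|j]; rewrite ?phi0 ?scale0r ?addSn.
Qed.

Lemma MA_mul_XnsubC p : MA (p * g) = MA p * g.
Proof. exact: (linext_mul_XnsubC _ _ Am_addn). Qed.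

Lemma MB_mul_XnsubC p : MB (p * g) = MB p * g.
Proof. exact: (linext_mul_XnsubC _ _ Bm_addn). Qed.

Lemma MC_mul_XnsubC p : MC (p * g) = MC p * g.
Proof. by rewrite /MC !(MA_mul_XnsubC, MB_mul_XnsubC) -!mul_polyC; ring. Qed.

End VermaOperators.

Section QuotientMap.
Variables (F : closedFieldType) (d : nat) (delta : F).
Local Notation n := (dprime d).
Local Notation g := (gW d delta).
Local Notation toW := (toW d delta).
Local Notation ofW := (@ofW F d).

Lemma toW_is_linear : linear toW.
Proof. by move=> k p r; apply/rowP => j; rewrite !mxE modpD modpZl coefD coefZ. Qed.
HB.instance Definition _ := GRing.isLinear.Build F {poly F} _ *:%R toW toW_is_linear.

Lemma ofW_is_linear : linear ofW.
Proof.
move=> k r s; rewrite /ofW scaler_sumr -big_split /=; apply: eq_bigr => j _.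
by rewrite !mxE scalerDl scalerA.
Qed.
HB.instance Definition _ := GRing.isLinear.Build F _ {poly F} *:%R ofW ofW_is_linear.

Lemma toW_mull p : toW (p * g) = 0.
Proof. by apply/rowP => j; rewrite !mxE modp_mull coef0. Qed.

Lemma toW_Xn : toW 'X^n = delta *: toW 1.
Proof.
have -> : 'X^n = 1 * g + delta *: 1 by rewrite mul1r -mul_polyC mulr1 subrK.
by rewrite linearD linearZ /= toW_mull add0r.
Qed.

Hypothesis n_gt0 : (0 < n)%N.

Lemma ofWK p : ofW (toW p) = p %% g.
Proof.
have size_mod : (size (p %% g)%R <= n)%N.
  by rewrite -ltnS -(size_XnsubC delta n_gt0) ltn_modp -size_poly_eq0 size_XnsubC.
rewrite /ofW; under eq_bigr => j _ do rewrite mxE.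
rewrite -poly_def; apply/polyP => j; rewrite coef_poly; case: ltnP => // le_nj.
by rewrite nth_default // (leq_trans size_mod).
Qed.

Lemma toW_modp_comm (X : {linear {poly F} -> {poly F}}) p :
  (forall r, X (r * g) = X r * g) -> toW (X (ofW (toW p))) = toW (X p).
Proof.
move=> X_mulg; rewrite ofWK {2}(divp_eq p g) linearD /= X_mulg linearD /=.
by rewrite toW_mull add0r.
Qed.

End QuotientMap.

Section Intertwining.
Variables (F : closedFieldType) (U W V : lmodType F).
Variables (AU BU CU : U -> U) (AW BW CW : W -> W) (AV BV CV : V -> V).

Lemma intertwines_comp (t : U -> W) (f : W -> V) :
  intertwines AU BU CU AW BW CW t -> intertwines AW BW CW AV BV CV f ->
  intertwines AU BU CU AV BV CV (f \o t).
Proof.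
move=> t_int f_int x /=; have [-> [-> ->]] := t_int x.
exact: f_int.
Qed.

Lemma intertwines_quotient (t : U -> W) (s : W -> U) (h : U -> V) :
  intertwines AU BU CU AV BV CV h -> (forall x, h (s (t x)) = h x) ->
  intertwines (fun r => t (AU (s r))) (fun r => t (BU (s r))) (fun r => t (CU (s r)))
              AV BV CV (h \o s).
Proof. by move=> h_int hst r /=; rewrite !hst; apply: h_int. Qed.

End Intertwining.

Section VermaHomomorphisms.
Variables (F : closedFieldType) (q a b c lam : F) (V : lmodType F).
Variables (A : {linear V -> V}) (h : {linear {poly F} -> V}).
Hypothesis hA : forall p, h (MA q a b c lam p) = A (h p).
Local Notation prodAtheta := (prodAtheta q a b c lam A).

Lemma intertwiner_Xn i : h 'X^i = prodAtheta i (h 1).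
Proof.
elim: i => [|i IHi] /=; first by rewrite expr0.
by rewrite (@XnS_MA _ q a b c lam) linearB linearZ /= hA IHi.
Qed.

Variables (n : nat) (delta : F).
Hypothesis q_neq0 : q != 0.
Hypothesis qn_sign : q ^+ n = 1 \/ q ^+ n = -1.
Hypothesis h_prod : prodAtheta n (h 1) = delta *: h 1.

Lemma intertwiner_Xn_addn i : h 'X^(i + n) = delta *: h 'X^i.
Proof.
elim: i => [|i IHi]; first by rewrite add0n expr0 intertwiner_Xn.
rewrite addSn !(@XnS_MA _ q a b c lam) !linearB !linearZ /= !hA IHi theta_addn //.
by rewrite linearZ !scalerN !scalerA mulrC.
Qed.

Lemma intertwiner_mul_XnsubC p : h (p * ('X^n - delta%:P)) = 0.
Proof.
rewrite -[p]coefK poly_def mulr_suml linear_sum big1 // => i _.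
rewrite -scalerAl linearZ /= mulrBr -exprD mulrC mul_polyC linearB linearZ /=.
by rewrite intertwiner_Xn_addn subrr scaler0.
Qed.

Lemma intertwiner_modp p : h (p %% ('X^n - delta%:P)) = h p.
Proof.
by rewrite {2}(divp_eq p ('X^n - delta%:P)) linearD /= intertwiner_mul_XnsubC add0r.
Qed.

End VermaHomomorphisms.

Lemma toW_intertwines (F : closedFieldType) (q a b c lam : F) (d : nat) (delta : F) :
  q != 0 -> q ^+ dprime d = 1 \/ q ^+ dprime d = -1 -> (0 < dprime d)%N ->
  intertwines (MA q a b c lam) (MB q a b c lam) (MC q a b c lam)
              (WA q a b c lam d delta) (WB q a b c lam d delta) (WC q a b c lam d delta)
              (toW d delta).
Proof.
move=> q_neq0 qn_sign n_gt0 p; rewrite /WA /WB /WC !toW_modp_comm //.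
- exact: MC_mul_XnsubC.
- exact: MB_mul_XnsubC.
- exact: MA_mul_XnsubC.
Qed.

Lemma dprime_gt0 d : (0 < d)%N -> (0 < dprime d)%N.
Proof.
rewrite /dprime; case: ifP => // odd_d.
by rewrite -[X in (0 < X)%N]odd_double_half odd_d add0n double_gt0.
Qed.

Lemma expr_dprime_sign (R : idomainType) (x : R) d :
  x ^+ d = 1 -> x ^+ dprime d = 1 \/ x ^+ dprime d = -1.
Proof.
move=> xd1; have : (x ^+ dprime d) ^+ 2 == 1.
  rewrite -exprM /dprime; case: ifP => odd_d; first by rewrite exprM xd1 expr1n.
  by rewrite -[X in x ^+ X]odd_double_half odd_d add0n -muln2 in xd1; rewrite xd1.
by rewrite sqrf_eq1 => /orP [] /eqP; [left | right].
Qed.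

Theorem proposition6p2 (F : closedFieldType) (q : F) (d : nat)
  (Hq : d.-primitive_root q) (Hd : ~ (d \in [:: 0%N; 1%N; 2%N; 4%N]))
  (a b c lam delta : F)
  (Ha : a != 0) (Hb : b != 0) (Hc : c != 0) (Hlam : lam != 0)
  (V : triMod q) (v : V) :
  (exists f : {linear 'rV[F]_(dprime d) -> V},
      intertwines (WA q a b c lam d delta) (WB q a b c lam d delta)
                  (WC q a b c lam d delta) (tmA V) (tmB V) (tmC V) f
      /\ f (w0 d delta) = v)
  <->
  ((exists f : {linear {poly F} -> V},
      intertwines (MA q a b c lam) (MB q a b c lam) (MC q a b c lam)
                  (tmA V) (tmB V) (tmC V) f
      /\ f (m0 F) = v)
   /\ prodAtheta q a b c lam (tmA V) (dprime d) v = delta *: v).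
Proof.
have d_gt0 : (0 < d)%N by rewrite lt0n; apply: contra_not_neq Hd => ->.
have n_gt0 := dprime_gt0 d_gt0.
have qd1 := prim_expr_order Hq.
have q_neq0 : q != 0.
  by apply: contraPneq qd1 => ->; rewrite expr0n gtn_eqF // => /eqP; rewrite eq_sym oner_eq0.
have qn_sign := expr_dprime_sign qd1.
split.
- case=> f [f_int <-].
  have h_int := intertwines_comp (toW_intertwines a b c lam delta q_neq0 qn_sign n_gt0) f_int.
  split; first by exists (f \o toW d delta)%FUN; split; [exact: h_int|].
  have hA x : (f \o toW d delta)%FUN (MA q a b c lam x) = tmA V ((f \o toW d delta)%FUN x).
    by have [] := h_int x.
  by rewrite -(intertwiner_Xn hA) /= toW_Xn linearZ.
- case=> [[h [h_int <-]] h_prod].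
  have hA x : h (MA q a b c lam x) = tmA V (h x) by have [] := h_int x.
  have h_toW x : h (ofW d (toW d delta x)) = h x.
    by rewrite (ofWK delta n_gt0) (intertwiner_modp hA q_neq0 qn_sign h_prod).
  exists (h \o ofW d)%FUN; split; last exact: (h_toW 1).
  by apply: intertwines_quotient h_int _.
Qed.
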